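(* Let $\mathcal G$ be an undirected graph on nodes $\{1,\dots,n\}$ with adjacency matrix $A=(a_{ij})$, and consider the networked SIR process on $\mathcal G$ with a given set of initially infected nodes. Let a budget $\bar C>0$, a level $\bar\lambda>0$, intervals $[\underline\beta_i,\bar\beta_i]\subset(0,\infty)$, $[\underline\delta_i,\bar\delta_i]\subset(0,\infty)$, and cost functions $f_i,g_i$ ($i=1,\dots,n$) be given, where each $f_i$ and each $g_i$ is a posynomial. Let $J,B,D$ be the $n\times n$ diagonal matrices with $J_{ii}=S_i(0)$, $B_{ii}=\beta_i$, $D_{ii}=\delta_i$. Suppose $\beta_1,\dots,\beta_n,\delta_1,\dots,\delta_n$ and an entrywise positive $v\in\mathbb R^n$ satisfy the (posynomial) constraints $$\sum_{i=1}^n\big(f_i(\delta_i)+g_i(\beta_i)\big)\le\bar C,\quad v^\top JBA+\mathbf 1_n^\top D<v^\top D,\quad v^\top I(0)<\bar\lambda+\sigma_I(0),$$ $$\underline\beta_i\le\beta_i\le\bar\beta_i,\quad \underline\delta_i\le\delta_i\le\bar\delta_i\quad(i=1,\dots,n).$$ Then these $\beta_i,\delta_i$ solve the resource allocation problem, i.e., $\beta_i\in[\underline\beta_i,\bar\beta_i]$, $\delta_i\in[\underline\delta_i,\bar\delta_i]$ for all $i$, $\sum_{i=1}^n(f_i(\delta_i)+g_i(\beta_i))\le\bar C$, and the SIR process with infection rates $\beta_i$ and recovery rates $\delta_i$ satisfies $\lambda\le\bar\lambda$.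
   Context: Networked SIR process with infection rates $\beta_i>0$ and recovery rates $\delta_i>0$: each node $i$ is at each time $t\ge0$ in exactly one of the states susceptible, infected, removed, encoded by $\{0,1\}$-valued $S_i(t),I_i(t),R_i(t)$. It is a continuous-time Markov process with $\Pr(I_i(t+h)=1\mid S_i(t)=1)=\beta_i\sum_{j}a_{ij}I_j(t)h+o(h)$ and $\Pr(R_i(t+h)=1\mid I_i(t)=1)=\delta_i h+o(h)$; removed nodes stay removed. At time $0$ each node is either susceptible or infected (known). $I(t)=[I_1(t),\dots,I_n(t)]^\top$; $\sigma_I(t),\sigma_R(t)$ are the numbers of infected and removed nodes at time $t$; $\lambda=\lim_{t\to\infty}E[\sigma_R(t)]-\sigma_I(0)$. A monomial in positive variables $x_1,\dots,x_m$ is $c x_1^{a_1}\cdots x_m^{a_m}$ with $c>0$, $a_k\in\mathbb R$; a posynomial is a finite sum of monomials. $\mathbf 1_n$ is the all-ones vector; vector inequalities are entrywise. *)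

From HB Require Import structures.
From mathcomp Require Import all_boot all_order all_algebra.
From mathcomp Require Import all_classical all_reals all_analysis.
Set Implicit Arguments. Unset Strict Implicit. Unset Printing Implicit Defensive.
Import Order.TTheory GRing.Theory Num.Theory.
Import numFieldNormedType.Exports.
Local Open Scope ring_scope.

(* Node states encoded in 'I_3 : 0 = susceptible, 1 = infected, 2 = removed. *)
Definition config (n : nat) := {ffun 'I_n -> 'I_3}.

Definition stS : 'I_3 := @Ordinal 3 0 isT.
Definition stI : 'I_3 := @Ordinal 3 1 isT.
Definition stR : 'I_3 := @Ordinal 3 2 isT.

Definition upd (n : nat) (x : config n) (i : 'I_n) (s : 'I_3) : config n :=
  [ffun j => if j == i then s else x j].

Definition sir_rate (R : realType) (n : nat) (A : 'M[R]_n)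
  (beta delta : 'I_n -> R) (x y : config n) : R :=
  \sum_(i < n)
    ((if (x i == stS) && (y == upd x i stI)
      then beta i * \sum_(j < n) A i j * (x j == stI)%:R else 0)
   + (if (x i == stI) && (y == upd x i stR) then delta i else 0)).

Definition sir_gen (R : realType) (n : nat) (A : 'M[R]_n)
  (beta delta : 'I_n -> R) (x y : config n) : R :=
  sir_rate A beta delta x y
  - (x == y)%:R * \sum_(z : config n) sir_rate A beta delta x z.

(* p x t = Pr(state at time t = x), for the process started deterministically
   at x0: characterized by the Kolmogorov forward equations p' = p Q, p(0)=e_x0. *)
Definition sir_law (R : realType) (n : nat) (A : 'M[R]_n)
  (beta delta : 'I_n -> R) (x0 : config n) (p : config n -> R -> R) : Prop :=
  (forall x, p x 0 = (x == x0)%:R) /\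
  (forall x (t : R), is_derive t 1 (p x)
       (\sum_(y : config n) p y t * sir_gen A beta delta y x)).

Definition num_in (n : nat) (s : 'I_3) (x : config n) : nat :=
  #|[set i | x i == s]|.

Definition expected_removed (R : realType) (n : nat)
  (p : config n -> R -> R) (t : R) : R :=
  \sum_(x : config n) p x t * (num_in stR x)%:R.

Definition posynomial (R : realType) (f : R -> R) : Prop :=
  exists s : seq (R * R),
    all (fun ca => 0 < ca.1) s /\
    forall x : R, 0 < x -> f x = \sum_(ca <- s) ca.1 * powR x ca.2.

Definition adjacency (R : realType) (n : nat) (A : 'M[R]_n) : Prop :=
  (forall i j, A i j = 0 \/ A i j = 1) /\
  (forall i j, A i j = A j i) /\
  (forall i, A i i = 0).

From HB Require Import structures.
From mathcomp Require Import all_boot all_order all_algebra.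
From mathcomp Require Import all_classical all_reals all_analysis.
From mathcomp Require Import ring lra zify.
Import Order.TTheory GRing.Theory Num.Theory.
Import numFieldNormedType.Exports.
Local Open Scope classical_set_scope.
Local Open Scope ring_scope.

(* Removal is permanent, so E[sigma_R(t)] is nondecreasing. It is dominated by
   the expectation of Phi(x) = sum_j ([x_j = R] + v_j [x_j = I]
   + v_j [x_j = S] [x0_j <> S]), whose drift under the generator is at most
   sum_j [x_j = I] ((v^T J B A)_j + delta_j - v_j delta_j) <= 0 by the threshold
   condition, so E[Phi(x_t)] <= Phi(x0) = v^T I(0). Hence E[sigma_R(t)] converges
   to a limit below lambdabar + sigma_I(0). The law is only given as a solution
   of the forward equations p' = p Q, so its nonnegativity is proved separately,
   by induction along the acyclic transition graph. *)

Section RealCalculus.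
Context {R : realType}.

Lemma derive_ge0_nondecreasing {h h' : R -> R} :
  (forall t : R, is_derive t 1 h (h' t)) -> (forall t : R, 0 <= t -> 0 <= h' t) ->
  forall s t, 0 <= s -> s <= t -> h s <= h t.
Proof.
move=> dh h'_ge0; apply: (@ger0_derive1_ndecry R h 0).
- by move=> t _; case: (dh t).
- move=> t; rewrite in_itv /= andbT => /ltW t_ge0.
  by rewrite derive1E derive_val; exact: h'_ge0.
- apply: continuous_subspaceT => t; apply: differentiable_continuous.
  by apply/derivable1_diffP; case: (dh t).
Qed.

Lemma is_derive_big_seq {I : Type} (r : seq I) (h : I -> R -> R) (dh : I -> R) (t : R) :
  (forall i, is_derive t 1 (h i) (dh i)) ->
  is_derive t 1 (fun s => \sum_(i <- r) h i s) (\sum_(i <- r) dh i).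
Proof.
move=> dh_i; elim: r => [|i r IHr].
  rewrite big_nil; under eq_fun do rewrite big_nil; exact: is_derive_cst.
rewrite big_cons; under eq_fun do rewrite big_cons; exact: is_deriveD.
Qed.

Lemma is_derive_mulr_cst {h : R -> R} {dh t : R} (c : R) :
  is_derive t 1 h dh -> is_derive t 1 (fun s => h s * c) (dh * c).
Proof.
move=> dh_t; rewrite mulrC; under eq_fun do rewrite mulrC.
exact: is_deriveZ.
Qed.

Lemma is_derive_expR_scale (c t : R) :
  is_derive t 1 (fun s => expR (c * s)) (c * expR (c * t)).
Proof.
have dlin : is_derive t 1 (fun s : R => c * s) c.
  by rewrite -[X in is_derive _ _ _ X]mulr1; exact: is_deriveZ.
by rewrite mulrC; exact: (is_derive1_comp (f := expR) (g := fun s => c * s)).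
Qed.

Lemma nondecreasing_bounded_cvg {h : R -> R} {M : R} :
  (forall s t, 0 <= s -> s <= t -> h s <= h t) -> (forall t : R, 0 <= t -> h t <= M) ->
  exists L : R, h t @[t --> +oo] --> L /\ L <= M.
Proof.
move=> h_ndecr h_le.
pose hp t := h (if 0 <= t then t else 0).
have hp_ndecr : nondecreasing_fun hp.
  move=> s t st; rewrite /hp.
  have [s0|s0] := boolP (0 <= s); first by rewrite (le_trans s0 st) h_ndecr.
  by case: ifP => t0; rewrite ?h_ndecr.
have hp_ub : ubound (range hp) M.
  by move=> _ [t _ <-]; rewrite /hp; case: ifP => [t0|_]; apply: h_le.
exists (sup (range hp)); split; last by apply: ge_sup => //; exists (hp 0), 0.
apply: cvg_trans (nondecreasing_cvgr hp_ndecr (ex_intro _ M hp_ub)).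
by apply: near_eq_cvg; near=> t; rewrite /hp ifT.
Unshelve. all: end_near.
Qed.

End RealCalculus.

Definition node_sum {R : realType} {n : nat} (G : 'I_n -> 'I_3 -> R)
  (x : config n) : R :=
  \sum_(j < n) G j (x j).

Definition stage_sum {n : nat} (x : config n) : nat := \sum_(i < n) val (x i).

Lemma stage_sum_upd {n : nat} (x : config n) (i : 'I_n) (s : 'I_3) :
  (stage_sum (upd x i s) + val (x i) = stage_sum x + val s)%N.
Proof.
rewrite /stage_sum (bigD1 i) //= [in RHS](bigD1 i) //= ffunE eqxx.
under eq_bigr => j ji do rewrite ffunE (negbTE ji).
lia.
Qed.

Lemma node_sum_upd {R : realType} {n : nat} (G : 'I_n -> 'I_3 -> R)
  (x : config n) (i : 'I_n) (s : 'I_3) :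
  node_sum G (upd x i s) - node_sum G x = G i s - G i (x i).
Proof.
rewrite /node_sum (bigD1 i) //= [X in _ - X](bigD1 i) //= ffunE eqxx.
under eq_bigr => j ji do rewrite ffunE (negbTE ji).
by rewrite opprD addrACA subrr addr0.
Qed.

Section SIRGenerator.
Context {R : realType} {n : nat} (A : 'M[R]_n) (beta delta : 'I_n -> R).

Local Notation rate := (sir_rate A beta delta).
Local Notation gen := (sir_gen A beta delta).

Definition infection_pressure (x : config n) (i : 'I_n) : R :=
  beta i * \sum_(j < n) A i j * (x j == stI)%:R.

Definition sir_drift (F : config n -> R) (x : config n) : R :=
  \sum_(y : config n) gen x y * F y.

Definition expectation (p : config n -> R -> R) (F : config n -> R) (t : R) : R :=
  \sum_(x : config n) p x t * F x.

Lemma sir_rate_ge0 (x y : config n) :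
  (forall i j, 0 <= A i j) -> (forall i, 0 <= beta i) -> (forall i, 0 <= delta i) ->
  0 <= rate x y.
Proof.
move=> A_ge0 beta_ge0 delta_ge0; apply: sumr_ge0 => i _.
apply: addr_ge0; case: ifP => // _.
by apply: mulr_ge0 => //; apply: sumr_ge0 => j _; apply: mulr_ge0.
Qed.

Lemma sir_rate_eq0 (x y : config n) :
  ~~ (stage_sum x < stage_sum y)%N -> rate x y = 0.
Proof.
move=> xy; rewrite /sir_rate big1 // => i _.
have noJump (s s' : 'I_3) : val s' = (val s).+1 -> (x i == s) && (y == upd x i s') = false.
  move=> ss'; apply/negbTE/negP => /andP[/eqP xi /eqP yE].
  by move: xy (stage_sum_upd x i s'); rewrite -yE xi ss'; lia.
by rewrite !noJump // addr0.
Qed.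

Lemma sum_sir_rate_mul (x : config n) (F : config n -> R) :
  \sum_(y : config n) rate x y * F y =
  \sum_(i < n) ((if x i == stS then infection_pressure x i * F (upd x i stI) else 0)
              + (if x i == stI then delta i * F (upd x i stR) else 0)).
Proof.
have pick (b : bool) (a : R) (z : config n) :
    \sum_(y : config n) (if b && (y == z) then a else 0) * F y = if b then a * F z else 0.
  case: b => /=; last by rewrite big1 // => y _; rewrite mul0r.
  by rewrite (bigD1 z) //= eqxx big1 ?addr0 // => y /negbTE ->; rewrite mul0r.
under eq_bigr do rewrite /sir_rate mulr_suml.
rewrite exchange_big; apply: eq_bigr => i _.
by under eq_bigr do rewrite mulrDl; rewrite big_split /= !pick.
Qed.

Lemma drift_jumps (F : config n -> R) (x : config n) :
  sir_drift F x = \sum_(y : config n) rate x y * (F y - F x).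
Proof.
rewrite /sir_drift /sir_gen; under eq_bigr do rewrite mulrBl -mulrA.
rewrite sumrB; set out := \sum_(z : config n) rate x z.
have -> : \sum_(y : config n) (x == y)%:R * (out * F y) = out * F x.
  rewrite (bigD1 x) //= eqxx mul1r big1 ?addr0 // => y yx.
  by rewrite eq_sym (negbTE yx) mul0r.
by under [RHS]eq_bigr do rewrite mulrBr; rewrite sumrB -mulr_suml mulrC.
Qed.

Lemma drift_node_sum (G : 'I_n -> 'I_3 -> R) (x : config n) :
  sir_drift (node_sum G) x =
  \sum_(i < n) ((if x i == stS then infection_pressure x i * (G i stI - G i stS) else 0)
              + (if x i == stI then delta i * (G i stR - G i stI) else 0)).
Proof.
rewrite drift_jumps sum_sir_rate_mul; apply: eq_bigr => i _.
by rewrite !node_sum_upd; case: eqP => [->|_]; case: eqP => [->|_].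
Qed.

End SIRGenerator.

Section SIRLaw.
Context {R : realType} {n : nat} {A : 'M[R]_n} {beta delta : 'I_n -> R}.
Context {x0 : config n} {p : config n -> R -> R}.
Hypothesis law : sir_law A beta delta x0 p.

Local Notation rate := (sir_rate A beta delta).
Local Notation gen := (sir_gen A beta delta).
Local Notation drift := (sir_drift A beta delta).

Lemma is_derive_expectation (F : config n -> R) (t : R) :
  is_derive t 1 (expectation p F) (\sum_(x : config n) p x t * drift F x).
Proof.
have := is_derive_big_seq (index_enum (config n)) (fun y s => p y s * F y)
  (fun y => (\sum_(x : config n) p x t * gen x y) * F y) t
  (fun y => is_derive_mulr_cst (F y) ((law.2) y t)).
suff -> : \sum_(y : config n) (\sum_(x : config n) p x t * gen x y) * F y =
          \sum_(x : config n) p x t * drift F x by [].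
under eq_bigr do rewrite mulr_suml.
rewrite exchange_big; apply: eq_bigr => x _.
by rewrite /sir_drift mulr_sumr; apply: eq_bigr => y _; rewrite mulrA.
Qed.

Lemma is_derive_sir_law_balance (x : config n) (t : R) :
  is_derive t 1 (p x)
    (\sum_(y : config n) p y t * rate y x - p x t * \sum_(z : config n) rate x z).
Proof.
suff <- : \sum_(y : config n) p y t * gen y x =
          \sum_(y : config n) p y t * rate y x - p x t * \sum_(z : config n) rate x z.
  exact: law.2.
rewrite /sir_gen; under eq_bigr do rewrite mulrBr; rewrite sumrB.
congr (_ - _); rewrite (bigD1 x) //= eqxx mul1r [X in _ + X]big1 ?addr0 // => y yx.
by rewrite (negbTE yx) mul0r mulr0.
Qed.

Hypotheses (A_ge0 : forall i j, 0 <= A i j) (beta_ge0 : forall i, 0 <= beta i)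
  (delta_ge0 : forall i, 0 <= delta i).

(* Induction on [stage_sum]: p x is fed only by configurations of smaller
   stage sum, so [expR (c t) * p x t] has a nonnegative derivative, where c is
   the total outflow rate of x. *)
Lemma sir_law_ge0 (x : config n) (t : R) : 0 <= t -> 0 <= p x t.
Proof.
move: t; suff : forall k y, (stage_sum y < k)%N -> forall t : R, 0 <= t -> 0 <= p y t.
  by apply; exact: ltnSn.
elim=> // k IHk {}x xk t t_ge0.
set c := \sum_(z : config n) rate x z.
set inflow := fun u => \sum_(y : config n) p y u * rate y x.
have inflow_ge0 (u : R) : 0 <= u -> 0 <= inflow u.
  move=> u_ge0; apply: sumr_ge0 => y _.
  have [->|rate_neq0] := eqVneq (rate y x) 0; first by rewrite mulr0.
  apply: mulr_ge0; last exact: sir_rate_ge0.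
  apply: IHk u_ge0; suff : (stage_sum y < stage_sum x)%N by lia.
  by rewrite ltnNge; apply: contra rate_neq0 => ?; apply/eqP/sir_rate_eq0; rewrite -leqNgt.
have d_weighted (u : R) : is_derive u 1 (fun s => expR (c * s) * p x s) (expR (c * u) * inflow u).
  have := is_deriveM (is_derive_expR_scale c u) (is_derive_sir_law_balance x u).
  have scaleE (a b : R) : a *: b = a * b by [].
  by congr is_derive; rewrite !scaleE -/c -/(inflow u); ring.
have := derive_ge0_nondecreasing d_weighted
  (fun u u_ge0 => mulr_ge0 (expR_ge0 _) (inflow_ge0 u u_ge0)) 0 t (le_refl 0) t_ge0.
rewrite mulr0 expR0 mul1r (law.1 x) => /(le_trans (ler0n _ _)).
by rewrite pmulr_rge0 ?expR_gt0.
Qed.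

Lemma expectation_nondecreasing {F : config n -> R} :
  (forall y, 0 <= drift F y) ->
  forall s t, 0 <= s -> s <= t -> expectation p F s <= expectation p F t.
Proof.
move=> drift_ge0; apply: derive_ge0_nondecreasing (is_derive_expectation F) _ => u u_ge0.
by apply: sumr_ge0 => y _; rewrite mulr_ge0 ?sir_law_ge0.
Qed.

Lemma expectation_le_initial {F : config n -> R} :
  (forall y, drift F y <= 0) -> forall t, 0 <= t -> expectation p F t <= F x0.
Proof.
move=> drift_le0 t t_ge0.
have -> : F x0 = expectation p F 0.
  rewrite /expectation (bigD1 x0) //= (law.1 x0) eqxx mul1r big1 ?addr0 // => y yx0.
  by rewrite (law.1 y) (negbTE yx0) mul0r.
rewrite -lerN2; apply: derive_ge0_nondecreasing
  (fun u => is_deriveN (is_derive_expectation F u)) _ _ _ _ t_ge0 => // u u_ge0.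
by rewrite oppr_ge0; apply: sumr_le0 => y _; rewrite mulr_ge0_le0 ?sir_law_ge0.
Qed.

Lemma ler_expectation {F G : config n -> R} {t : R} :
  (forall x, F x <= G x) -> 0 <= t -> expectation p F t <= expectation p G t.
Proof.
by move=> FG t_ge0; apply: ler_sum => x _; rewrite ler_wpM2l ?sir_law_ge0.
Qed.

Lemma expectation_cvg_le_initial {F G : config n -> R} :
  (forall y, 0 <= drift F y) -> (forall x, F x <= G x) -> (forall y, drift G y <= 0) ->
  exists L : R, expectation p F t @[t --> +oo] --> L /\ L <= G x0.
Proof.
move=> driftF_ge0 FG driftG_le0; apply: nondecreasing_bounded_cvg.
  exact: expectation_nondecreasing.
move=> t t_ge0; apply: le_trans (ler_expectation FG t_ge0) _.
exact: expectation_le_initial.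
Qed.

End SIRLaw.

Definition removed_weight {R : realType} {n : nat} (j : 'I_n) (s : 'I_3) : R :=
  (s == stR)%:R.

Lemma expected_removed_node_sum (R : realType) (n : nat) (p : config n -> R -> R) (t : R) :
  expected_removed p t = expectation p (node_sum removed_weight) t.
Proof.
apply: eq_bigr => x _; congr (_ * _).
rewrite /num_in -sum1dep_card natr_sum big_mkcond /=.
by apply: eq_bigr => j _; rewrite /removed_weight; case: (x j == stR).
Qed.

(* The susceptible weight vanishes on every reachable configuration; it makes
   the increment of an infection [v j * J j], as in the threshold condition. *)
Definition lyapunov_weight {R : realType} {n : nat} (x0 : config n) (v : 'rV[R]_n)
    (j : 'I_n) (s : 'I_3) : R :=
  (s == stR)%:R + v 0 j * ((s == stI)%:R + (x0 j != stS)%:R * (s == stS)%:R).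

Section Lyapunov.
Context {R : realType} {n : nat} {A : 'M[R]_n} {beta delta : 'I_n -> R}.
Context {x0 : config n} {v : 'rV[R]_n}.

Lemma removed_le_lyapunov :
  (forall i, 0 <= v 0 i) -> forall x,
  node_sum removed_weight x <= node_sum (lyapunov_weight x0 v) x.
Proof.
move=> v_ge0 x; apply: ler_sum => j _; rewrite lerDl.
by rewrite mulr_ge0 ?addr_ge0 ?mulr_ge0.
Qed.

Lemma lyapunov_initial :
  (forall i, x0 i != stR) ->
  node_sum (lyapunov_weight x0 v) x0 = (v *m \col_i ((x0 i == stI)%:R : R)) 0 0.
Proof.
move=> x0_notR; rewrite mxE; apply: eq_bigr => j _.
rewrite mxE /lyapunov_weight (negbTE (x0_notR j)) add0r.
by case: (x0 j == stS); rewrite ?mulr0 ?mul0r ?addr0.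
Qed.

Lemma drift_removed_ge0 :
  (forall i, 0 <= delta i) -> forall y,
  0 <= sir_drift A beta delta (node_sum removed_weight) y.
Proof.
move=> delta_ge0 y; rewrite drift_node_sum; apply: sumr_ge0 => i _.
by apply: addr_ge0; case: ifP => _; rewrite /removed_weight ?subrr ?mulr0 ?subr0 ?mulr1.
Qed.

Lemma drift_lyapunov_le0 :
  (forall i j, 0 <= A i j) -> (forall i, 0 <= beta i) -> (forall i, 0 <= v 0 i) ->
  (forall j, \sum_(i < n) v 0 i * (x0 i == stS)%:R * beta i * A i j + delta j <= v 0 j * delta j) ->
  forall y, sir_drift A beta delta (node_sum (lyapunov_weight x0 v)) y <= 0.
Proof.
move=> A_ge0 beta_ge0 v_ge0 threshold y; rewrite drift_node_sum.
have jumpSI i : lyapunov_weight x0 v i stI - lyapunov_weight x0 v i stS = v 0 i * (x0 i == stS)%:R.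
  by rewrite /lyapunov_weight /=; case: (x0 i == stS) => /=; ring.
have jumpIR i : lyapunov_weight x0 v i stR - lyapunov_weight x0 v i stI = 1 - v 0 i.
  by rewrite /lyapunov_weight /=; ring.
under eq_bigr do rewrite jumpSI jumpIR.
apply: (@le_trans _ _ (\sum_(i < n) (infection_pressure A beta y i * (v 0 i * (x0 i == stS)%:R)
    + (y i == stI)%:R * (delta i * (1 - v 0 i))))).
  apply: ler_sum => i _; apply: lerD; last by case: ifP; rewrite ?mul1r ?mul0r.
  case: ifP => // _; apply: mulr_ge0; last exact: mulr_ge0.
  by apply: mulr_ge0 => //; apply: sumr_ge0 => j _; apply: mulr_ge0.
rewrite big_split /=.
have -> : \sum_(i < n) infection_pressure A beta y i * (v 0 i * (x0 i == stS)%:R) =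
    \sum_(j < n) (y j == stI)%:R * \sum_(i < n) v 0 i * (x0 i == stS)%:R * beta i * A i j.
  under eq_bigr do rewrite /infection_pressure mulr_sumr mulr_suml.
  rewrite exchange_big; apply: eq_bigr => j _; rewrite mulr_sumr.
  by apply: eq_bigr => i _; ring.
rewrite -big_split /=; apply: sumr_le0 => j _.
rewrite -mulrDr mulr_ge0_le0 //; have := threshold j; lra.
Qed.

End Lyapunov.

Lemma threshold_mx_entry (R : realType) (n : nat) (A : 'M[R]_n) (x0 : config n)
    (beta delta : 'I_n -> R) (v : 'rV[R]_n) (j : 'I_n) :
  let J := diag_mx (\row_i (x0 i == stS)%:R) in
  let B := diag_mx (\row_i beta i) in
  let D := diag_mx (\row_i delta i) in
  ((v *m J *m B *m A + const_mx 1 *m D) 0 j < (v *m D) 0 j) =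
  (\sum_(i < n) v 0 i * (x0 i == stS)%:R * beta i * A i j + delta j < v 0 j * delta j).
Proof.
by rewrite /= !mul_mx_diag !mxE mul1r; congr (_ + _ < _); apply: eq_bigr => i _; rewrite !mxE.
Qed.

Theorem theorem1 (R : realType) (n : nat) (A : 'M[R]_n)
  (x0 : config n)
  (Cbar lambdabar : R)
  (bl bu dl du : 'I_n -> R)
  (f g : 'I_n -> R -> R)
  (beta delta : 'I_n -> R) (v : 'rV[R]_n) :
  adjacency A ->
  (forall i, x0 i != stR) ->
  0 < Cbar -> 0 < lambdabar ->
  (forall i, 0 < bl i /\ bl i <= bu i) ->
  (forall i, 0 < dl i /\ dl i <= du i) ->
  (forall i, posynomial (f i) /\ posynomial (g i)) ->
  (forall i, 0 < v 0 i) ->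
  let J := diag_mx (\row_i (x0 i == stS)%:R) in
  let B := diag_mx (\row_i beta i) in
  let D := diag_mx (\row_i delta i) in
  let I0 := \col_i ((x0 i == stI)%:R : R) in
  let sigmaI0 : R := (num_in stI x0)%:R in
  \sum_(i < n) (f i (delta i) + g i (beta i)) <= Cbar ->
  (forall j, (v *m J *m B *m A + const_mx 1 *m D) 0 j < (v *m D) 0 j) ->
  (v *m I0) 0 0 < lambdabar + sigmaI0 ->
  (forall i, bl i <= beta i <= bu i) ->
  (forall i, dl i <= delta i <= du i) ->
  [/\ (forall i, bl i <= beta i <= bu i),
      (forall i, dl i <= delta i <= du i),
      \sum_(i < n) (f i (delta i) + g i (beta i)) <= Cbar &
      forall p : config n -> R -> R, sir_law A beta delta x0 p ->
        exists L : R,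
          (expected_removed p t @[t --> +oo] --> L) /\
          L - sigmaI0 <= lambdabar].
Proof.
move=> [A01 _] x0_notR _ _ bl_pos dl_pos _ v_pos J B D I0 sigmaI0 cost threshold
  initial beta_in delta_in.
split=> // p law.
have A_ge0 i j : 0 <= A i j by case: (A01 i j) => ->.
have beta_ge0 i : 0 <= beta i.
  by case: (bl_pos i) (beta_in i) => /ltW + _ /andP[+ _]; exact: le_trans.
have delta_ge0 i : 0 <= delta i.
  by case: (dl_pos i) (delta_in i) => /ltW + _ /andP[+ _]; exact: le_trans.
have v_ge0 i : 0 <= v 0 i by exact: ltW.
have threshold_entry j : \sum_(i < n) v 0 i * (x0 i == stS)%:R * beta i * A i j + delta j
                    <= v 0 j * delta j.
  by apply: ltW; rewrite -threshold_mx_entry; exact: threshold.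
have [L [removed_cvg L_le]] := expectation_cvg_le_initial law A_ge0 beta_ge0 delta_ge0
  (drift_removed_ge0 delta_ge0) (removed_le_lyapunov v_ge0)
  (drift_lyapunov_le0 A_ge0 beta_ge0 v_ge0 threshold_entry).
exists L; split; first by under eq_fun do rewrite expected_removed_node_sum.
by move: L_le initial; rewrite lyapunov_initial // -/I0 -/sigmaI0; lra.
Qed.
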